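(* Let $T$ be a weighted star (a star $K_{1,n}$ with nonzero real edge weights). Then $T^{\#}$ is isomorphic to $T$.
   Context: For a weighted graph $G$ with adjacency matrix $A$ (entry $(i,j)$ equal to the weight of edge $v_iv_j$, or $0$ if no edge), $A^{\#}$ is the group inverse of $A$ (unique $X$ with $AXA=A$, $XAX=X$, $AX=XA$), and the group inverse graph $G^{\#}$ is the weighted graph on the same vertex set with $v_iv_j$ an edge iff $(A^{\#})_{ij}\neq 0$, weighted by that entry. Two weighted graphs are called isomorphic if their underlying (unweighted) graphs are isomorphic. *)

From mathcomp Require Import all_boot all_order all_algebra all_fingroup.
Set Implicit Arguments. Unset Strict Implicit. Unset Printing Implicit Defensive.
Import GRing.Theory Num.Theory.
Local Open Scope ring_scope.

Definition is_group_inverse (R : nzRingType) (m : nat) (A X : 'M[R]_m) : Prop :=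
  [/\ A *m X *m A = A, X *m A *m X = X & A *m X = X *m A].

(* Adjacency matrix of the weighted star K_{1,n} on vertices 'I_(n.+1):
   vertex 0 is the centre, vertices 1..n are the leaves; the edge between
   the centre and leaf j has weight w j (w ord0 is irrelevant). *)
Definition star_adj (R : nzRingType) (n : nat) (w : 'I_n.+1 -> R) : 'M[R]_n.+1 :=
  \matrix_(i, j)
    (if (i == ord0) && (j != ord0) then w j
     else if (j == ord0) && (i != ord0) then w i
     else 0).

(* The underlying (unweighted) graphs of the weighted graphs with adjacency
   matrices A and B (edge v_i v_j iff the (i,j) entry is nonzero) are
   isomorphic: some bijection of the vertex set maps edges exactly to edges. *)
Definition underlying_isomorphic (R : nzRingType) (m : nat) (A B : 'M[R]_m) : Prop :=
  exists p : {perm 'I_m}, forall i j, (A i j != 0) = (B (p i) (p j) != 0).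

(* The adjacency matrix of a weighted star is A = e v^T + v e^T, where e is the
   unit vector of the centre and v, the vector of leaf weights, is orthogonal
   to e.  Hence A e = v and A v = s e with s = v^T v, so A^3 = s A.  When s is
   nonzero this makes s^-1 A the group inverse of A, and when s = 0 the star
   has no nonzero weight and A = 0 is its own group inverse.  Either way the
   group inverse, which is unique, is a nonzero multiple of A and has the same
   support. *)

From mathcomp Require Import all_boot all_order all_algebra all_fingroup.
Set Implicit Arguments. Unset Strict Implicit. Unset Printing Implicit Defensive.
Import GRing.Theory Num.Theory.
Local Open Scope ring_scope.

Lemma group_inverse_unique (R : nzRingType) (m : nat) (A X Y : 'M[R]_m) :
  is_group_inverse A X -> is_group_inverse A Y -> X = Y.
Proof.
case=> AXA XAX AX_XA [AYA YAY AY_YA].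
have AX_AY : A *m X = A *m Y.
  have -> : A *m X = A *m Y *m (A *m X) by rewrite mulmxA AYA.
  by rewrite AY_YA AX_XA -mulmxA [A *m (X *m A)]mulmxA AXA.
by rewrite -XAX -mulmxA AX_AY mulmxA -AX_XA AX_AY AY_YA YAY.
Qed.

Lemma group_inverse0 (R : nzRingType) (m : nat) :
  is_group_inverse (0 : 'M[R]_m) 0.
Proof. by split; rewrite !mul0mx. Qed.

Lemma group_inverse_of_cube (F : fieldType) (m : nat) (A : 'M[F]_m) (s : F) :
  s != 0 -> A *m A *m A = s *: A -> is_group_inverse A (s^-1 *: A).
Proof.
move=> s_neq0 A3; split.
- by rewrite -scalemxAr -scalemxAl A3 scalerA mulVf // scale1r.
- by rewrite -!scalemxAl -scalemxAr A3 !scalerA mulrC mulrA mulfV // mul1r.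
- by rewrite -scalemxAr -scalemxAl.
Qed.

Lemma underlying_isomorphic_scale (F : fieldType) (m : nat) (A : 'M[F]_m) (c : F) :
  c != 0 -> underlying_isomorphic (c *: A) A.
Proof.
by move=> c_neq0; exists 1%g => i j; rewrite !perm1 mxE mulf_eq0 negb_or c_neq0.
Qed.

Section RankTwoSymmetric.

Variables (R : comNzRingType) (m : nat) (e v : 'cV[R]_m).
Hypotheses (e_norm1 : e^T *m e = 1) (e_perp_v : e^T *m v = 0).

Let A := e *m v^T + v *m e^T.
Let s := (v^T *m v) 0 0.

Lemma rank_two_symmetric_cube : A *m A *m A = s *: A.
Proof.
have v_perp_e : v^T *m e = 0 by rewrite -[e]trmxK -trmx_mul e_perp_v trmx0.
have Ae : A *m e = v by rewrite mulmxDl -!mulmxA v_perp_e e_norm1 mulmx0 mulmx1 add0r.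
have Av : A *m v = s *: e.
  by rewrite mulmxDl -!mulmxA e_perp_v [v^T *m v]mx11_scalar mul_mx_scalar mulmx0 addr0.
have A2 : A *m A = v *m v^T + s *: (e *m e^T).
  by rewrite {2}/A mulmxDr !mulmxA Ae Av scalemxAl.
by rewrite -mulmxA A2 mulmxDr !mulmxA Av -scalemxAr !mulmxA Ae -scalemxAl scalerDr addrC.
Qed.

End RankTwoSymmetric.

Lemma cV_dot_self_eq0 (R : realDomainType) (m : nat) (v : 'cV[R]_m) :
  ((v^T *m v) 0 0 == 0) = (v == 0).
Proof.
apply/idP/eqP=> [|->]; last by rewrite mulmx0 mxE.
rewrite mxE psumr_eq0 => [/allP v0|i _]; last by rewrite mxE -expr2 sqr_ge0.
apply/matrixP=> i j; rewrite ord1 !mxE.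
by have := v0 i (mem_index_enum i); rewrite mxE -expr2 sqrf_eq0 => /eqP.
Qed.

Section Star.

Variables (R : nzRingType) (n : nat) (w : 'I_n.+1 -> R).

Definition star_centre : 'cV[R]_n.+1 := delta_mx ord0 0.
Definition star_weights : 'cV[R]_n.+1 := \col_i (if i == ord0 then 0 else w i).

Lemma star_centre_norm1 : star_centre^T *m star_centre = 1.
Proof. by rewrite trmx_delta mul_delta_mx [LHS]mx11_scalar mxE. Qed.

Lemma star_centre_perp : star_centre^T *m star_weights = 0.
Proof. by rewrite trmx_delta -rowE; apply/matrixP=> i j; rewrite !mxE eqxx. Qed.

Lemma star_adj_rank_two :
  star_adj w = star_centre *m star_weights^T + star_weights *m star_centre^T.
Proof.
apply/matrixP=> i j; rewrite !mxE !big_ord1 !mxE eqxx !andbT.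
by case: (i == ord0); case: (j == ord0); rewrite /= ?mulr0 ?mul0r ?mulr1 ?mul1r ?addr0 ?add0r.
Qed.

End Star.

Lemma star_group_inverse (R : realFieldType) (n : nat) (w : 'I_n.+1 -> R) :
  exists2 c : R, c != 0 & is_group_inverse (star_adj w) (c *: star_adj w).
Proof.
set s := ((star_weights w)^T *m star_weights w) 0 0.
have [/eqP s0|s_neq0] := eqVneq s 0.
  exists 1; first exact: oner_neq0.
  move: s0; rewrite cV_dot_self_eq0 star_adj_rank_two => /eqP->.
  by rewrite trmx0 mulmx0 mul0mx addr0 scaler0; apply: group_inverse0.
exists s^-1; first by rewrite invr_eq0.
apply: group_inverse_of_cube s_neq0 _.
by rewrite star_adj_rank_two rank_two_symmetric_cube ?star_centre_norm1 ?star_centre_perp.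
Qed.

Theorem corollary2p3 (R : realFieldType) (n : nat) (w : 'I_n.+1 -> R)
    (hw : forall j : 'I_n.+1, j != ord0 -> w j != 0) :
  (exists X : 'M[R]_n.+1, is_group_inverse (star_adj w) X) /\
  (forall X : 'M[R]_n.+1, is_group_inverse (star_adj w) X ->
     underlying_isomorphic X (star_adj w)).
Proof.
have [c c_neq0 c_ginv] := star_group_inverse w.
split; first by exists (c *: star_adj w).
move=> X X_ginv; rewrite (group_inverse_unique X_ginv c_ginv).
exact: underlying_isomorphic_scale.
Qed.
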